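(* Let $N_1,N_2,N_w,N_b,N$ and $T$ be as in the context. For a vector $c=(c_0,\dots,c_{N_w})\in\mathbb{R}^{N_w+1}$ define $b=(b_0,\dots,b_{N_w})$ by the polynomial identity $$\sum_{i=0}^{N_w}c_i\,x^iy^{N_1-i}z^{N_w-i}=\sum_{i=0}^{N_w}b_i\,(x-yz)^i\,y^{N_1-i}z^{N_w-i},$$ equivalently $b_j=\sum_{i=j}^{N_w}\binom{i}{j}c_i$ (an invertible linear map, with inverse $c_i=\sum_{j=i}^{N_w}(-1)^{j-i}\binom{j}{i}b_j$). Then $Tc=\lambda c$ holds if and only if, for all $i=0,\dots,N_w$ (with $b_{-1}:=0$), $$N_1N_2(\lambda-1)\,b_i=(N_1-i+1)(N_w-i+1)\,b_{i-1}-i\,(N_w-i+N_b+1)\,b_i .$$ In particular, $T$ is similar to a lower triangular matrix with diagonal entries $1-\frac{i(N_w+N_b+1-i)}{N_1N_2}$, $i=0,\dots,N_w$.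
   Context: Integers $N_1,N_2\ge1$, $N_w,N_b\ge0$ with $N_w+N_b=N_1+N_2=:N$, $N_w\le N_1$, $N_w\le N_2$. States $i\in\{0,\dots,N_w\}$ (number of white balls in urn 1). $p_i=\frac{(N_1-i)(N_w-i)}{N_1N_2}$, $q_i=\frac{i(N_b-N_1+i)}{N_1N_2}$, $r_i=1-p_i-q_i$. $T$ is the $(N_w+1)\times(N_w+1)$ matrix with $T_{i+1,i}=p_i$, $T_{i-1,i}=q_i$, $T_{ii}=r_i$, other entries $0$ ($T_{ij}$ is the probability of moving from state $j$ to state $i$; columns sum to 1). *)

From HB Require Import structures.
From mathcomp Require Import all_boot all_order all_algebra.
Set Implicit Arguments. Unset Strict Implicit. Unset Printing Implicit Defensive.
Import Order.TTheory GRing.Theory Num.Theory.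
Local Open Scope ring_scope.

Section Urn.
Variable R : realFieldType.
Variables N1 N2 Nw Nb : nat.

Definition p_ (i : nat) : R :=
  ((N1%:R - i%:R) * (Nw%:R - i%:R)) / (N1%:R * N2%:R).
Definition q_ (i : nat) : R :=
  (i%:R * (Nb%:R - N1%:R + i%:R)) / (N1%:R * N2%:R).
Definition r_ (i : nat) : R := 1 - p_ i - q_ i.

(* T i j = probability of moving from state j to state i (columns sum to 1). *)
Definition urnT : 'M[R]_(Nw.+1) :=
  \matrix_(i, j) (if (i : nat) == (j : nat).+1 then p_ j
                  else if (i : nat).+1 == j then q_ j
                  else if (i : nat) == j then r_ j else 0).

(* b_j = sum_{i=j}^{Nw} C(i,j) c_i  (binomial vanishes for i < j). *)
Definition bcoef (c : 'cV[R]_(Nw.+1)) (j : nat) : R :=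
  \sum_(i < Nw.+1) ('C(i, j))%:R * c i 0.
End Urn.

(* With the Pascal matrix [B j i = C(i, j)] (unitriangular, hence invertible)
   we have [b = B c] and the intertwining [B T = L B], where [L] is lower
   bidiagonal with diagonal [1 - i (Nw + Nb + 1 - i) / (N1 N2)] and subdiagonal
   [(N1 - i + 1) (Nw - i + 1) / (N1 N2)].  Entrywise this is a binomial identity
   which reduces to the absorption rules [(j + 1) C(k, j + 1) = (k - j) C(k, j)]
   and [k C(k - 1, j + 1) = (k - j - 1) C(k, j + 1)].  Hence [T c = lam c] iff
   [L b = lam b], which read row by row is the recurrence, and [T = B^-1 L B]. *)

From HB Require Import structures.
From mathcomp Require Import all_boot all_order all_algebra.
From mathcomp Require Import ring zify.
Import Order.TTheory GRing.Theory Num.Theory.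
Local Open Scope ring_scope.

Lemma sum_ord_if_eq (R : nmodType) (n m : nat) (F : nat -> R) :
  \sum_(i < n) (if (i : nat) == m then F i else 0) = if (m < n)%N then F m else 0.
Proof. by rewrite -big_mkcond big_ord1_eq. Qed.

Lemma sum_ord_if_eqS (R : nmodType) (n m : nat) (F : nat -> R) :
  \sum_(i < n) (if (i : nat).+1 == m then F i else 0)
  = if m is m'.+1 then (if (m' < n)%N then F m' else 0) else 0.
Proof.
case: m => [|m]; first by rewrite big1.
by under eq_bigr do rewrite eqSS; rewrite sum_ord_if_eq.
Qed.

Lemma intertwined_eigenvectorE {R : comUnitRingType} {n} {B T L : 'M[R]_n}
    (c : 'cV[R]_n) (lam : R) :
  B \in unitmx -> B *m T = L *m B ->
  T *m c = lam *: c <-> L *m (B *m c) = lam *: (B *m c).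
Proof.
move=> B_unit BTL; rewrite mulmxA -BTL -mulmxA scalemxAr.
split=> [-> // | /(congr1 (mulmx (invmx B)))]; by rewrite !mulKmx.
Qed.

Section UrnTriangularization.
Variable R : realFieldType.
Variables N1 N2 Nw Nb : nat.
Hypotheses (N1_gt0 : (0 < N1)%N) (N2_gt0 : (0 < N2)%N).

Local Notation T := (urnT R N1 N2 Nw Nb).
Local Notation p := (p_ R N1 N2 Nw).
Local Notation q := (q_ R N1 N2 Nb).
Local Notation r := (r_ R N1 N2 Nw Nb).

Let N1_neq0 : N1%:R != 0 :> R. Proof. by rewrite pnatr_eq0 -lt0n. Qed.
Let N2_neq0 : N2%:R != 0 :> R. Proof. by rewrite pnatr_eq0 -lt0n. Qed.

Definition urn_diag (i : nat) : R :=
  1 - i%:R * (Nw%:R + Nb%:R + 1 - i%:R) / (N1%:R * N2%:R).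
Definition urn_subdiag (i : nat) : R :=
  (N1%:R - i%:R + 1) * (Nw%:R - i%:R + 1) / (N1%:R * N2%:R).

Lemma binomial_urn_step (k j : nat) :
  'C(k.+1, j)%:R * p k + 'C(k.-1, j)%:R * q k + 'C(k, j)%:R * r k
  = urn_diag j * 'C(k, j)%:R
    + urn_subdiag j * (if j is j'.+1 then 'C(k, j')%:R else 0).
Proof.
case: j => [|j]; first by rewrite /= !bin0 /r_ /urn_diag !mul0r subr0 mulr0; ring.
have absorb_left : j.+1%:R * 'C(k, j.+1)%:R = (k%:R - j%:R) * 'C(k, j)%:R :> R.
  have [le_jk | lt_kj] := leqP j k; first by rewrite -natrB // -!natrM mul_bin_left.
  by rewrite !bin_small ?mulr0 // ltnW.
have absorb_down : k%:R * 'C(k.-1, j.+1)%:R = (k%:R - j.+1%:R) * 'C(k, j.+1)%:R :> R.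
  have [le_jk | lt_kj] := leqP j.+1 k; first by rewrite -natrB // -!natrM mul_bin_down.
  by rewrite !(@bin_small _ j.+1) ?mulr0 //; lia.
rewrite binS natrD; apply/eqP; rewrite -subr_eq0; apply/eqP.
(* The difference of the two sides is a combination of the absorption identities. *)
transitivity (((Nb%:R : R) - N1%:R + k%:R) / (N1%:R * N2%:R)
                * (k%:R * 'C(k.-1, j.+1)%:R - (k%:R - j.+1%:R) * 'C(k, j.+1)%:R)
              + (Nw%:R + N1%:R - j%:R - k%:R) / (N1%:R * N2%:R)
                * (j.+1%:R * 'C(k, j.+1)%:R - (k%:R - j%:R) * 'C(k, j)%:R) : R).
  by rewrite /r_ /p_ /q_ /urn_diag /urn_subdiag; field; rewrite N1_neq0 N2_neq0.
by rewrite absorb_left absorb_down !subrr !mulr0 addr0.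
Qed.

Definition binom_mx : 'M[R]_(Nw.+1) := \matrix_(j, i) 'C(i, j)%:R.

Definition urnL : 'M[R]_(Nw.+1) :=
  \matrix_(i, j) (if (j : nat) == i then urn_diag i
                  else if (j : nat).+1 == i then urn_subdiag i else 0).

Lemma mulmx_urnT_entry {n} {A : 'M[R]_(n, Nw.+1)} {a : nat -> R} j k :
  (forall i, A j i = a i) -> (A *m T) j k = a k.+1 * p k + a k.-1 * q k + a k * r k.
Proof.
move=> Aja; rewrite mxE (eq_bigr (fun i : 'I_Nw.+1 =>
   (if (i : nat) == k.+1 then a i else 0) * p k
 + (if (i : nat).+1 == k then a i else 0) * q k
 + (if (i : nat) == k then a i else 0) * r k)); last first.
  move=> i _; rewrite Aja mxE.
  by do 3!case: eqP => //= ?; rewrite ?mul0r ?mulr0 ?addr0 ?add0r //; lia.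
rewrite !big_split /= -!mulr_suml sum_ord_if_eq sum_ord_if_eqS sum_ord_if_eq ltn_ord.
congr (_ + _ + _).
  rewrite ltnS; have [// | Nw_le_k] := ltnP k Nw.
  have -> : (k : nat) = Nw by move: (ltn_ord k); lia.
  by rewrite /p_ subrr !(mulr0, mul0r).
case: k => [[|k] lt_k] /=; first by rewrite /q_ !mul0r mulr0.
by rewrite (ltnW lt_k).
Qed.

Lemma urnL_mulmx_entry {m} {A : 'M[R]_(Nw.+1, m)} {a : nat -> R} i k :
  (forall j, A j k = a j) ->
  (urnL *m A) i k
  = urn_diag i * a i + urn_subdiag i * (if (i : nat) is i'.+1 then a i' else 0).
Proof.
move=> Aka; rewrite mxE (eq_bigr (fun j : 'I_Nw.+1 =>
   urn_diag i * (if (j : nat) == i then a j else 0)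
 + urn_subdiag i * (if (j : nat).+1 == i then a j else 0))); last first.
  move=> j _; rewrite Aka mxE.
  by do 2!case: eqP => //= ?; rewrite ?mul0r ?mulr0 ?addr0 ?add0r //; lia.
rewrite big_split /= -!mulr_sumr sum_ord_if_eq sum_ord_if_eqS ltn_ord.
by case: i => [[|i] lt_i] //=; rewrite (ltnW lt_i).
Qed.

Lemma binom_mx_urnT : binom_mx *m T = urnL *m binom_mx.
Proof.
apply/matrixP => j k.
rewrite (@mulmx_urnT_entry _ _ (fun i => 'C(i, j)%:R)) => [|i]; last by rewrite mxE.
rewrite (@urnL_mulmx_entry _ _ (fun i => 'C(k, i)%:R)) => [|i]; last by rewrite mxE.
exact: binomial_urn_step.
Qed.

Lemma binom_mx_unit : binom_mx \in unitmx.
Proof.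
rewrite unitmxE -det_tr det_trig.
  by rewrite big1 ?unitr1 // => i _; rewrite !mxE binn.
by apply/is_trig_mxP => i j lt_ij; rewrite !mxE bin_small.
Qed.

Lemma binom_mx_mulE (c : 'cV[R]_(Nw.+1)) i : (binom_mx *m c) i 0 = bcoef c i.
Proof. by rewrite mxE; apply: eq_bigr => j _; rewrite mxE. Qed.

Lemma urnL_eigenvectorE {v : 'cV[R]_(Nw.+1)} {a : nat -> R} (lam : R) :
  (forall i, v i 0 = a i) ->
  urnL *m v = lam *: v <->
  forall i : 'I_Nw.+1,
    urn_diag i * a i + urn_subdiag i * (if (i : nat) is i'.+1 then a i' else 0)
    = lam * a i.
Proof.
move=> va; split=> [/matrixP eig i | eig].
  by rewrite -(urnL_mulmx_entry _ _ va) eig mxE va.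
by apply/matrixP => i k; rewrite ord1 (urnL_mulmx_entry _ _ va) mxE va eig.
Qed.

Lemma urn_row_eigenE (i : nat) (lam b b' : R) :
  urn_diag i * b + urn_subdiag i * b' = lam * b <->
  N1%:R * N2%:R * (lam - 1) * b
  = (N1%:R - i%:R + 1) * (Nw%:R - i%:R + 1) * b'
    - i%:R * (Nw%:R - i%:R + Nb%:R + 1) * b.
Proof.
have scaled : N1%:R * N2%:R * (lam - 1) * b
    - ((N1%:R - i%:R + 1) * (Nw%:R - i%:R + 1) * b'
       - i%:R * (Nw%:R - i%:R + Nb%:R + 1) * b)
  = N1%:R * N2%:R * (lam * b - (urn_diag i * b + urn_subdiag i * b')).
  by rewrite /urn_diag /urn_subdiag; field; rewrite N1_neq0 N2_neq0.
split=> [row | eig]; apply/eqP.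
  by rewrite -subr_eq0 scaled row subrr mulr0.
rewrite eq_sym -subr_eq0.
by move/eqP: eig; rewrite -subr_eq0 scaled mulf_eq0 (negbTE (mulf_neq0 N1_neq0 N2_neq0)).
Qed.

Lemma urnT_eigenvectorE (c : 'cV[R]_(Nw.+1)) (lam : R) :
  T *m c = lam *: c <->
  forall i : 'I_(Nw.+1),
    N1%:R * N2%:R * (lam - 1) * bcoef c i
    = (N1%:R - (i : nat)%:R + 1) * (Nw%:R - (i : nat)%:R + 1)
        * (if (i : nat) is k.+1 then bcoef c k else 0)
      - (i : nat)%:R * (Nw%:R - (i : nat)%:R + Nb%:R + 1) * bcoef c i.
Proof.
rewrite (intertwined_eigenvectorE c lam binom_mx_unit binom_mx_urnT).
rewrite (urnL_eigenvectorE _ (binom_mx_mulE c)).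
by split=> eig i; apply/urn_row_eigenE/eig.
Qed.

End UrnTriangularization.

Theorem mainTheorem2 (R : realFieldType) (N1 N2 Nw Nb : nat)
  (hN1 : (1 <= N1)%N) (hN2 : (1 <= N2)%N) (hN : (Nw + Nb = N1 + N2)%N)
  (hw1 : (Nw <= N1)%N) (hw2 : (Nw <= N2)%N) :
  (forall (c : 'cV[R]_(Nw.+1)) (lam : R),
     urnT R N1 N2 Nw Nb *m c = lam *: c <->
     (forall i : 'I_(Nw.+1),
        N1%:R * N2%:R * (lam - 1) * bcoef c i =
          (N1%:R - (i : nat)%:R + 1) * (Nw%:R - (i : nat)%:R + 1)
            * (if (i : nat) is k.+1 then bcoef c k else 0)
          - (i : nat)%:R * (Nw%:R - (i : nat)%:R + Nb%:R + 1) * bcoef c i))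
  /\
  (exists (P L : 'M[R]_(Nw.+1)),
     [/\ P \in unitmx,
         urnT R N1 N2 Nw Nb = P *m L *m invmx P,
         (forall i j : 'I_(Nw.+1), (i < j)%N -> L i j = 0) &
         (forall i : 'I_(Nw.+1),
            L i i = 1 - (i : nat)%:R * (Nw%:R + Nb%:R + 1 - (i : nat)%:R)
                        / (N1%:R * N2%:R))]).
Proof.
split=> [c lam | ]; first exact: urnT_eigenvectorE.
have B_unit := binom_mx_unit R Nw.
have BTL := binom_mx_urnT R N1 N2 Nw Nb hN1 hN2.
exists (invmx (binom_mx R Nw)), (urnL R N1 N2 Nw Nb); split.
- by rewrite unitmx_inv.
- by rewrite invmxK -mulmxA -BTL mulKmx.
- by move=> i j lt_ij; rewrite mxE !gtn_eqF // ltnW.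
- by move=> i; rewrite mxE eqxx.
Qed.
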